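(* Let $n\ge4$ and for $1\le p\le n$ let $K_p$ be the set of regular elements of $\mathcal{OCT}_n$ whose image has exactly $p$ elements. Then for all $1\le p\le n-2$, $\langle K_p\rangle\subseteq\langle K_{p+1}\rangle$, where $\langle A\rangle$ denotes the subsemigroup of $\mathcal{T}_n$ generated by $A$.
   Context: $\mathcal{T}_n$ is the full transformation semigroup on $[n]=\{1,\dots,n\}$ under composition. $\alpha$ is a contraction if $|x\alpha-y\alpha|\le|x-y|$ for all $x,y$, order-preserving if $x\le y\Rightarrow x\alpha\le y\alpha$. $\mathcal{OCT}_n$ is the semigroup of order-preserving contractions; $\alpha\in\mathcal{OCT}_n$ is regular if $\alpha\beta\alpha=\alpha$ for some $\beta\in\mathcal{OCT}_n$. *)

(* [n] = {1,...,n} is modelled by 'I_n = {0,...,n-1}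
   (a shift by one, which preserves order and distances). *)
From mathcomp Require Import all_boot all_order.
Set Implicit Arguments. Unset Strict Implicit. Unset Printing Implicit Defensive.

Definition trans (n : nat) := {ffun 'I_n -> 'I_n}.

(* composition in the paper's (right action) convention: x (a b) = (x a) b *)
Definition tcomp n (a b : trans n) : trans n := [ffun x => b (a x)].

Definition ndist (x y : nat) : nat := (x - y) + (y - x).

Definition order_preserving n (a : trans n) : Prop :=
  forall x y : 'I_n, x <= y -> a x <= a y.

Definition contraction n (a : trans n) : Prop :=
  forall x y : 'I_n, ndist (a x) (a y) <= ndist x y.

Definition in_OCT n (a : trans n) : Prop :=
  order_preserving a /\ contraction a.

Definition regular_OCT n (a : trans n) : Prop :=
  in_OCT a /\ exists b : trans n, in_OCT b /\ tcomp (tcomp a b) a = a.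

Definition rank n (a : trans n) : nat := #|[set a x | x : 'I_n]|.

Definition K n (p : nat) (a : trans n) : Prop := regular_OCT a /\ rank a = p.

Inductive gen n (A : trans n -> Prop) : trans n -> Prop :=
| gen_base a : A a -> gen A a
| gen_comp a b : gen A a -> gen A b -> gen A (tcomp a b).

(* The regular elements of OCT_n are exactly the ramps x |-> c + min(x - s, w):
   if a b a = a, then a is constant below s := b(a 0) and above e := b(a (n-1)),
   and as both a and b are order-preserving contractions, a (n-1) - a 0 <= e - s
   <= a (n-1) - a 0, which forces a to climb with slope 1 on [s, e].  Ramps
   compose like clamped translations, so a ramp of width w factors as
   ramp s 1 w * ramp 1 c w, and each of these factors, having its source or its
   target away from the ends of the chain, is a product of two ramps of width
   w + 1, i.e. of two elements of K_(w+2). *)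
From mathcomp Require Import all_boot all_order.
From mathcomp Require Import zify.
Set Implicit Arguments. Unset Strict Implicit. Unset Printing Implicit Defensive.

Lemma in_OCT_lipschitz n (a : trans n) (x y : 'I_n) : in_OCT a -> x <= y ->
  a x <= a y <= a x + (y - x).
Proof.
move=> [op ct] xy; have := ct x y; have := op x y xy; rewrite /ndist; lia.
Qed.

Definition ramp {m} (s c w : nat) : trans m.+1 :=
  [ffun x : 'I_m.+1 => inord (c + minn (x - s) w)].

Section Ramps.

Variable m : nat.
Implicit Types (s c w : nat) (x : 'I_m.+1).

Lemma ramp_val s c w x : c + w <= m -> ramp s c w x = c + minn (x - s) w :> nat.
Proof. by move=> cw; rewrite ffunE inordK //; lia. Qed.

Lemma ramp_in_OCT s c w : c + w <= m -> in_OCT (ramp s c w : trans m.+1).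
Proof.
by move=> cw; split=> x y; rewrite /ndist !ramp_val //; lia.
Qed.

Lemma tcomp_ramp_shift_source s1 c1 w1 d c2 w2 : c1 + w1 <= m -> c2 + w2 <= m ->
  tcomp (ramp s1 c1 w1) (ramp (c1 + d) c2 w2)
  = ramp (s1 + d) c2 (minn (w1 - d) w2) :> trans m.+1.
Proof.
move=> cw1 cw2; apply/ffunP => x; apply: val_inj.
by rewrite ffunE /= !ramp_val //; lia.
Qed.

Lemma tcomp_ramp_shift_target s1 c e w1 c2 w2 :
  e <= w2 -> c + e + w1 <= m -> c2 + w2 <= m ->
  tcomp (ramp s1 (c + e) w1) (ramp c c2 w2)
  = ramp s1 (c2 + e) (minn w1 (w2 - e)) :> trans m.+1.
Proof.
move=> ew cw1 cw2; apply/ffunP => x; apply: val_inj.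
by rewrite ffunE /= !ramp_val //; lia.
Qed.

Lemma tcomp_ramp_match s1 c w1 c2 w2 : c + w1 <= m -> c2 + w2 <= m ->
  tcomp (ramp s1 c w1) (ramp c c2 w2) = ramp s1 c2 (minn w1 w2) :> trans m.+1.
Proof.
by move=> cw1 cw2; have := tcomp_ramp_shift_source s1 0 cw1 cw2; rewrite !addn0 subn0.
Qed.

Lemma rank_ramp s c w : s + w <= m -> c + w <= m -> rank (ramp s c w : trans m.+1) = w.+1.
Proof.
move=> sw cw; rewrite /rank.
have -> : [set ramp s c w x | x : 'I_m.+1]
        = [set ramp s c w (inord (s + k)) | k : 'I_w.+1].
  apply/setP => y; apply/imsetP/imsetP => [[x _ ->]|[k _ ->]]; last by exists (inord (s + k)).
  have kw : minn (x - s) w < w.+1 by rewrite ltnS geq_minr.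
  exists (Ordinal kw) => //; apply: val_inj => /=.
  by rewrite !ramp_val //= inordK; lia.
rewrite card_imset ?card_ord // => k1 k2.
have k1w := ltn_ord k1; have k2w := ltn_ord k2.
move/(congr1 val) => /=; rewrite !ramp_val // !inordK; try lia.
by move=> k12; apply: val_inj => /=; lia.
Qed.

Lemma ramp_K s c w : s + w <= m -> c + w <= m -> K w.+1 (ramp s c w : trans m.+1).
Proof.
move=> sw cw; split; last exact: rank_ramp.
split; first exact: ramp_in_OCT.
exists (ramp c s w); split; first exact: ramp_in_OCT.
by rewrite tcomp_ramp_match // minnn tcomp_ramp_match // minnn.
Qed.

Lemma regular_ramp (a : trans m.+1) : regular_OCT a ->
  exists s c w, [/\ s + w <= m, c + w <= m & a = ramp s c w].
Proof.
move=> [OCTa [b [OCTb aba]]].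
have lip := in_OCT_lipschitz OCTa.
have aba_x x : a (b (a x)) = a x :> nat.
  by have := congr1 (fun f : trans m.+1 => f x) aba; rewrite !ffunE => ->.
have bounds x : a ord0 <= a x <= a ord_max.
  have /andP[-> _] := lip ord0 x (leq0n x).
  by have /andP[-> _] := lip x ord_max (leq_ord x).
have /andP[ct _] := bounds ord_max.
have /andP[se es] := in_OCT_lipschitz OCTb ct.
have /andP[_ te] := lip _ _ se; rewrite !aba_x in te.
move: (b (a ord0)) (b (a ord_max)) (aba_x ord0) (aba_x ord_max) se es te
  => s e a_s a_e se es te.
have em := ltn_ord e; have tm := ltn_ord (a ord_max).
exists s, (a ord0), (a ord_max - a ord0); split; [lia | lia |].
apply/ffunP => x; apply: val_inj => /=; rewrite ramp_val; last by lia.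
have := bounds x; have [xs | sx] := leqP x s.
  by have /andP[xs' _] := lip _ _ xs; lia.
have /andP[_ xc] := lip _ _ (ltnW sx); have [xe | ex] := leqP x e.
  by have /andP[_ ex'] := lip _ _ xe; lia.
by have /andP[ex' _] := lip _ _ (ltnW ex); lia.
Qed.

Lemma gen_ramp_shift_source s c w : w.+2 <= m -> 0 < s -> s + w <= m -> c + w < m ->
  gen (@K m.+1 w.+2) (ramp s c w).
Proof.
move=> wm s0 sw cw.
have -> : ramp s c w = tcomp (ramp s.-1 0 w.+1) (ramp (0 + 1) c w.+1) :> trans m.+1.
  by rewrite tcomp_ramp_shift_source; first congr (ramp _ _ _); lia.
by apply: gen_comp; apply: gen_base; apply: ramp_K; lia.
Qed.

Lemma gen_ramp_shift_target s c w : w.+2 <= m -> 0 < c -> s + w < m -> c + w <= m ->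
  gen (@K m.+1 w.+2) (ramp s c w).
Proof.
move=> wm c0 sw cw.
have -> : ramp s c w = tcomp (ramp s (0 + 1) w.+1) (ramp 0 c.-1 w.+1) :> trans m.+1.
  by rewrite tcomp_ramp_shift_target; first congr (ramp _ _ _); lia.
by apply: gen_comp; apply: gen_base; apply: ramp_K; lia.
Qed.

Lemma gen_ramp s c w : w.+2 <= m -> s + w <= m -> c + w <= m ->
  gen (@K m.+1 w.+2) (ramp s c w).
Proof.
move=> wm sw cw.
rewrite -[w in ramp _ _ w]minnn -(@tcomp_ramp_match s 1); try lia.
apply: gen_comp.
- case: (posnP s) => [->|s0];
    [apply: gen_ramp_shift_target | apply: gen_ramp_shift_source]; lia.
- case: (posnP c) => [->|c0];
    [apply: gen_ramp_shift_source | apply: gen_ramp_shift_target]; lia.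
Qed.

End Ramps.

Theorem proposition9 (n : nat) : 4 <= n ->
  forall p : nat, 1 <= p -> p <= n - 2 ->
  forall a : trans n, gen (@K n p) a -> gen (@K n p.+1) a.
Proof.
case: n => [//|m] _ [//|w] _ wm a.
elim=> [{}a [reg_a rank_a] | a1 a2 _ gen_a1 _ gen_a2]; last exact: gen_comp.
have [s [c [w' [sw cw a_ramp]]]] := regular_ramp reg_a.
move: rank_a; rewrite a_ramp rank_ramp // => -[w'w]; subst a w'.
by apply: gen_ramp; lia.
Qed.
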